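(* Let $\mathcal{A}\subseteq\mathbb{R}^3$, $K\ge2$, $P_1,\ldots,P_K>0$, $\sigma^2>0$, $h_1,\ldots,h_K\in L^2(\mathcal{A})$ with positive definite Gram matrix $\mathbf{R}$, $r_{k_1,k_2}=\int_{\mathcal{A}}h_{k_1}^{*}h_{k_2}\,\mathrm{d}\mathbf{r}$, $a_k=r_{k,k}$. Fix $k$ and let $\mathbf{h}_{\setminus k}(\mathbf{r})=[h_{k'}(\mathbf{r})]_{k'\neq k}$, $\mathbf{R}_k$ be $\mathbf{R}$ without row/column $k$, $\mathbf{r}_{k,k}=[r_{k',k}]_{k'\neq k}$, $\mathbf{P}_k=\mathrm{diag}(P_{k'}/\sigma^2)_{k'\neq k}$, and $w_{\mathsf{MMSE},k}(\mathbf{r})=h_k(\mathbf{r})-\mathbf{h}_{\setminus k}(\mathbf{r})(\mathbf{P}_k^{-1}+\mathbf{R}_k)^{-1}\mathbf{r}_{k,k}$. Consider the received field $y(\mathbf{r})=\sum_{j=1}^K\sqrt{P_j}h_j(\mathbf{r})s_j+n(\mathbf{r})$ with $s_j\sim\mathcal{CN}(0,1)$ mutually uncorrelated, and $n$ a zero-mean complex Gaussian process uncorrelated with the symbols with $\mathbb{E}\{n(\mathbf{r}_1)n^*(\mathbf{r}_2)\}=\sigma^2\delta(\mathbf{r}_1-\mathbf{r}_2)$; let $\hat y_k=\int_{\mathcal{A}}w_{\mathsf{MMSE},k}^*y\,\mathrm{d}\mathbf{r}$. Then the minimizer $\beta_k^\star$ of $\mathbb{E}\{|\beta\hat{y}_k-s_k|^2\}$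 over $\beta\in\mathbb{C}$ is $$\beta_k^{\star}=\beta_{\mathsf{MMSE},k}=\frac{\sqrt{P_k}}{P_k\big(a_k-\mathbf{r}_{k,k}^{\mathsf{H}}(\mathbf{P}_k^{-1}+\mathbf{R}_k)^{-1}\mathbf{r}_{k,k}\big)+\sigma^2},$$ and the resulting effective beamformer is $$w^{\star}_{\mathsf{MMSE},k}(\mathbf{r})=\beta_{\mathsf{MMSE},k}w_{\mathsf{MMSE},k}(\mathbf{r})=\frac{\sqrt{P_k}\big(h_k(\mathbf{r})-\mathbf{h}_{\setminus k}(\mathbf{r})(\mathbf{P}_k^{-1}+\mathbf{R}_k)^{-1}\mathbf{r}_{k,k}\big)}{P_k\big(a_k-\mathbf{r}_{k,k}^{\mathsf{H}}(\mathbf{P}_k^{-1}+\mathbf{R}_k)^{-1}\mathbf{r}_{k,k}\big)+\sigma^2}.$$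
   Context: Standing assumption: channel responses pairwise non-parallel and $\mathbf{R}$ positive definite. *)

From mathcomp Require Import all_boot all_order all_algebra.
From mathcomp Require Import all_classical all_reals all_analysis.
From mathcomp.real_closed Require Import complex.
Set Implicit Arguments. Unset Strict Implicit. Unset Printing Implicit Defensive.
Import Order.TTheory GRing.Theory Num.Theory.
Import numFieldNormedType.Exports.
Local Open Scope ring_scope.
Local Open Scope classical_set_scope.

Definition R3 (R : realType) := ((R * R) * R)%type.
Definition leb3 (R : realType) :=
  (((@lebesgue_measure R) \x (@lebesgue_measure R)) \x (@lebesgue_measure R))%E.

Definition sqmod (R : realType) (z : R[i]) : R :=
  complex.Re z ^+ 2 + complex.Im z ^+ 2.

Definition cint (R : realType) (A : set (R3 R)) (f : R3 R -> R[i]) : R[i] :=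
  Complex (Rintegral (@leb3 R) A (fun x => complex.Re (f x)))
          (Rintegral (@leb3 R) A (fun x => complex.Im (f x))).

Definition L2 (R : realType) (A : set (R3 R)) (f : R3 R -> R[i]) : Prop :=
  [/\ measurable_fun A (fun x => complex.Re (f x)),
      measurable_fun A (fun x => complex.Im (f x)) &
      (@leb3 R).-integrable A (fun x => (sqmod (f x))%:E)].

Definition cL2 d (T : measurableType d) (R : realType) (P : probability T R)
  (X : T -> R[i]) : Prop :=
  [/\ measurable_fun setT (fun t => complex.Re (X t)),
      measurable_fun setT (fun t => complex.Im (X t)) &
      P.-integrable setT (fun t => (sqmod (X t))%:E)].

Definition cexpect d (T : measurableType d) (R : realType) (P : probability T R)
  (X : T -> R[i]) : R[i] :=
  Complex (fine ('E_P[fun t => complex.Re (X t)]))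
          (fine ('E_P[fun t => complex.Im (X t)])).

(* the index k' <> k associated with j : 'I_(K-1) (enumeration of k' <> k) *)
Lemma skip_proof (K : nat) (k : 'I_K) (j : 'I_K.-1) : (bump k j < K)%N.
Proof.
case: K k j => [[]//|K] k j /=.
rewrite /bump; have := ltn_ord j; have := ltn_ord k.
case: (k <= j)%N => /=; rewrite ?add1n ?add0n => _ hj //.
exact: (ltn_trans hj).
Qed.
Definition skip (K : nat) (k : 'I_K) (j : 'I_K.-1) : 'I_K :=
  Ordinal (skip_proof k j).

Definition ctr (R : realType) m n (M : 'M[R[i]]_(m, n)) : 'M[R[i]]_(n, m) :=
  (map_mx Num.conj M)^T.

Definition posdef (R : realType) n (M : 'M[R[i]]_n) : Prop :=
  ctr M = M /\ forall x : 'cV[R[i]]_n, x != 0 -> 0 < (ctr x *m M *m x) 0 0.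

Definition gram (R : realType) (A : set (R3 R)) K (h : 'I_K -> R3 R -> R[i])
  : 'M[R[i]]_K :=
  \matrix_(i, j) cint A (fun r => Num.conj (h i r) * h j r).

From mathcomp Require Import all_boot all_order all_algebra.
From mathcomp Require Import all_classical all_reals all_analysis.
From mathcomp.real_closed Require Import complex.
From mathcomp Require Import measurable_realfun ring lra.
Import Order.TTheory GRing.Theory Num.Theory.
Import numFieldNormedType.Exports.
Local Open Scope ring_scope.
Local Open Scope classical_set_scope.
Set Implicit Arguments. Unset Strict Implicit. Unset Printing Implicit Defensive.

(* The combiner output is [Y = sum_j b_j s_j + N w] with orthonormal symbols
   and noise uncorrelated with them, so [E|beta Y - s_k|^2] is a quadratic in
   [beta], minimised at [E(s_k Y^* ) / E|Y|^2 = b_k^* / E|Y|^2].  Write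
   [w = sum_i x_i h_i] with [x_k = 1] and the other coordinates equal to [-v],
   [v = (P_k^-1 + R_k)^-1 r_{k,k}].  Then [R x] has [k]-th entry
   [delta = a_k - r_{k,k}^H v] and its other entries are those of [P_k^-1 v].
   Since [b_j = sqrt P_j (R x)_j^*] and the noise power is
   [sigma^2 x^H R x = sigma^2 (delta - v^H P_k^-1 v)], the [v]-terms cancel in
   [E|Y|^2 = delta (P_k delta + sigma^2)], while [b_k^* = sqrt P_k delta].
   Positive definiteness of [R] gives [delta = x^H R x + v^H P_k^-1 v > 0]. *)

Section ComplexParts.
Variable R : realType.
Implicit Types x y : R[i].

Lemma complex_ext x y :
  complex.Re x = complex.Re y -> complex.Im x = complex.Im y -> x = y.
Proof. by case: x => a b; case: y => c e /= -> ->. Qed.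

Lemma Re_add x y : complex.Re (x + y) = complex.Re x + complex.Re y.
Proof. by case: x; case: y. Qed.

Lemma Im_add x y : complex.Im (x + y) = complex.Im x + complex.Im y.
Proof. by case: x; case: y. Qed.

Lemma Re_mul x y :
  complex.Re (x * y) = complex.Re x * complex.Re y - complex.Im x * complex.Im y.
Proof. by case: x => a b; case: y. Qed.

Lemma Im_mul x y :
  complex.Im (x * y) = complex.Re x * complex.Im y + complex.Im x * complex.Re y.
Proof. by case: x => a b; case: y. Qed.

Lemma Re_conj x : complex.Re x^* = complex.Re x.
Proof. by case: x. Qed.

Lemma Im_conj x : complex.Im x^* = - complex.Im x.
Proof. by case: x. Qed.

Lemma conj_real_complex (r : R) : (real_complex R r)^* = real_complex R r.
Proof. by apply: complex_ext; rewrite ?Re_conj ?Im_conj /= ?oppr0. Qed.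

Lemma sqmodE x : real_complex R (sqmod x) = x * x^*.
Proof. by rewrite /sqmod add_Re2_Im2 normCK. Qed.

Lemma sqmod_ge0 x : 0 <= sqmod x.
Proof. by rewrite /sqmod addr_ge0 ?sqr_ge0. Qed.

Lemma sqmod_eq0 x : (sqmod x == 0) = (x == 0).
Proof.
by rewrite -(inj_eq (@complexI _)) /sqmod add_Re2_Im2 expf_eq0 normr_eq0.
Qed.

Lemma sqmod0 : sqmod (0 : R[i]) = 0.
Proof. by apply/eqP; rewrite sqmod_eq0. Qed.

Lemma sqmodM x y : sqmod (x * y) = sqmod x * sqmod y.
Proof. by rewrite /sqmod Re_mul Im_mul; ring. Qed.

Lemma sqmodD_le x y : sqmod (x + y) <= 2 * sqmod x + 2 * sqmod y.
Proof.
rewrite /sqmod Re_add Im_add.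
have := sqr_ge0 (complex.Re x - complex.Re y).
have := sqr_ge0 (complex.Im x - complex.Im y).
nra.
Qed.

Lemma norm_parts_mulJ_le x y :
  `|complex.Re (x * y^*)| <= sqmod x + sqmod y /\
  `|complex.Im (x * y^*)| <= sqmod x + sqmod y.
Proof.
rewrite Re_mul Im_mul Re_conj Im_conj /sqmod.
case: x y => [a b] [c e] /=.
have := sqr_ge0 (a - c); have := sqr_ge0 (a + c);
have := sqr_ge0 (b - e); have := sqr_ge0 (b + e);
have := sqr_ge0 (a - e); have := sqr_ge0 (a + e);
have := sqr_ge0 (b - c); have := sqr_ge0 (b + c) => *.
by split; rewrite ler_norml; apply/andP; split; nra.
Qed.

End ComplexParts.

Section ComplexIntegral.
Context d (T : measurableType d) (R : realType)
  (mu : {measure set T -> \bar R}) (D : set T) (mD : measurable D).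
Implicit Types f g : T -> R[i].

(* For [leb3] on [A], resp. [P] on [setT], [cintegral] is [cint A], resp.
   [cexpect P], and [square_integrable] is [L2 A], resp. [cL2 P]. *)
Definition cintegral f : R[i] :=
  Complex (\int[mu]_(x in D) complex.Re (f x)) (\int[mu]_(x in D) complex.Im (f x)).

Definition square_integrable f :=
  [/\ measurable_fun D (fun x => complex.Re (f x)),
      measurable_fun D (fun x => complex.Im (f x)) &
      mu.-integrable D (fun x => (sqmod (f x))%:E)].

Definition cintegrable f :=
  mu.-integrable D (fun x => (complex.Re (f x))%:E) /\
  mu.-integrable D (fun x => (complex.Im (f x))%:E).

Lemma integrableZ_EFin (a : R) (u : T -> R) :
  mu.-integrable D (fun x => (u x)%:E) -> mu.-integrable D (fun x => (a * u x)%:E).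
Proof. by move=> iu; have := integrableZl mD a iu; apply: eq_integrable. Qed.

Lemma integrable_lincomb (a b : R) (u v : T -> R) :
  mu.-integrable D (fun x => (u x)%:E) -> mu.-integrable D (fun x => (v x)%:E) ->
  mu.-integrable D (fun x => (a * u x + b * v x)%:E).
Proof.
move=> iu iv.
have := integrableD mD (integrableZ_EFin a iu) (integrableZ_EFin b iv).
by apply: eq_integrable => // x _ /=; rewrite EFinD.
Qed.

Lemma cintegralD f g : cintegrable f -> cintegrable g ->
  cintegral (fun x => f x + g x) = cintegral f + cintegral g.
Proof.
move=> [f1 f2] [g1 g2]; apply: complex_ext => /=; rewrite -RintegralD //;
  by apply: eq_Rintegral => x _; rewrite ?Re_add ?Im_add.
Qed.

Lemma cintegralZ c f : cintegrable f -> cintegral (fun x => c * f x) = c * cintegral f.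
Proof.
move=> [f1 f2]; apply: complex_ext.
  rewrite Re_mul /= -!RintegralZl // -RintegralB //; try exact: integrableZ_EFin.
  by apply: eq_Rintegral => x _; rewrite Re_mul.
rewrite Im_mul /= -!RintegralZl // -RintegralD //; try exact: integrableZ_EFin.
by apply: eq_Rintegral => x _; rewrite Im_mul.
Qed.

Lemma cintegral_conj f : cintegrable f ->
  cintegral (fun x => (f x)^*) = (cintegral f)^*.
Proof.
move=> [_ f2]; apply: complex_ext.
  by rewrite Re_conj /=; apply: eq_Rintegral => x _; rewrite Re_conj.
rewrite Im_conj /= -mulN1r -RintegralZl //.
by apply: eq_Rintegral => x _; rewrite Im_conj mulN1r.
Qed.

Lemma measurable_EFin_sqmod f :
  measurable_fun D (fun x => complex.Re (f x)) ->
  measurable_fun D (fun x => complex.Im (f x)) ->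
  measurable_fun D (fun x => (sqmod (f x))%:E).
Proof.
by move=> mRe mIm; apply/measurable_EFinP/measurable_funD; exact: measurable_funX.
Qed.

Lemma square_integrableD f g : square_integrable f -> square_integrable g ->
  square_integrable (fun x => f x + g x).
Proof.
move=> [fRe fIm fi] [gRe gIm gi].
have mRe : measurable_fun D (fun x => complex.Re (f x + g x)).
  by under eq_fun do rewrite Re_add; exact: measurable_funD.
have mIm : measurable_fun D (fun x => complex.Im (f x + g x)).
  by under eq_fun do rewrite Im_add; exact: measurable_funD.
split => //; apply: le_integrable (integrable_lincomb 2 2 fi gi) => //.
  exact: measurable_EFin_sqmod.
move=> x _; rewrite lee_fin !ger0_norm ?sqmodD_le ?sqmod_ge0 //.
by rewrite addr_ge0 // mulr_ge0 ?sqmod_ge0.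
Qed.

Lemma square_integrableZ c f : square_integrable f ->
  square_integrable (fun x => c * f x).
Proof.
move=> [fRe fIm fi].
have mRe : measurable_fun D (fun x => complex.Re (c * f x)).
  under eq_fun do rewrite Re_mul.
  by apply: measurable_funB; apply: measurable_funM.
have mIm : measurable_fun D (fun x => complex.Im (c * f x)).
  under eq_fun do rewrite Im_mul.
  by apply: measurable_funD; apply: measurable_funM.
split => //; have := integrableZ_EFin (sqmod c) fi.
by apply: eq_integrable => // x _; rewrite sqmodM.
Qed.

Lemma square_integrableB f g : square_integrable f -> square_integrable g ->
  square_integrable (fun x => f x - g x).
Proof.
move=> hf hg; have := square_integrableD hf (square_integrableZ (-1) hg).
by under eq_fun do rewrite mulN1r.
Qed.

Lemma square_integrable_comb I (r : seq I) (b : I -> R[i]) (F : I -> T -> R[i]) :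
  (forall i, square_integrable (F i)) ->
  square_integrable (fun x => \sum_(i <- r) b i * F i x).
Proof.
move=> hF; elim: r => [|i r IH].
  under eq_fun do rewrite big_nil.
  split; try exact: measurable_cst.
  have := integrable0 mu D.
  by apply: eq_integrable => // x _; rewrite /sqmod /= expr0n addr0.
under eq_fun do rewrite big_cons.
by apply: square_integrableD => //; exact: square_integrableZ.
Qed.

Lemma cintegrable_mulJ f g : square_integrable f -> square_integrable g ->
  cintegrable (fun x => f x * (g x)^*).
Proof.
move=> [fRe fIm fi] [gRe gIm gi].
have mRe : measurable_fun D (fun x => complex.Re (f x * (g x)^*)).
  under eq_fun do rewrite Re_mul Re_conj Im_conj mulrN opprK.
  by apply: measurable_funD; apply: measurable_funM.
have mIm : measurable_fun D (fun x => complex.Im (f x * (g x)^*)).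
  under eq_fun do rewrite Im_mul Re_conj Im_conj mulrN addrC.
  by apply: measurable_funB; apply: measurable_funM.
split; apply: le_integrable (integrable_lincomb 1 1 fi gi) => //;
  try exact/measurable_EFinP.
all: move=> x _; rewrite lee_fin !mul1r (ger0_norm (addr_ge0 (sqmod_ge0 _) (sqmod_ge0 _))).
- exact: (norm_parts_mulJ_le (f x) (g x)).1.
- exact: (norm_parts_mulJ_le (f x) (g x)).2.
Qed.

Lemma cintegrable_Jmul f g : square_integrable f -> square_integrable g ->
  cintegrable (fun x => (f x)^* * g x).
Proof.
move=> hf hg; have := cintegrable_mulJ hg hf.
by under eq_fun do rewrite mulrC.
Qed.

End ComplexIntegral.

Section ComplexInnerProduct.
Context d (T : measurableType d) (R : realType)
  (mu : {measure set T -> \bar R}) (D : set T) (mD : measurable D).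
Implicit Types f g : T -> R[i].
Local Notation sqint := (square_integrable mu D).

Definition cinner f g := cintegral mu D (fun x => f x * (g x)^*).

Lemma cinnerDl f f' g : sqint f -> sqint f' -> sqint g ->
  cinner (fun x => f x + f' x) g = cinner f g + cinner f' g.
Proof.
move=> hf hf' hg; rewrite /cinner -cintegralD //; try exact: cintegrable_mulJ.
by apply: congr1; apply/funext => x; rewrite mulrDl.
Qed.

Lemma cinnerZl c f g : sqint f -> sqint g ->
  cinner (fun x => c * f x) g = c * cinner f g.
Proof.
move=> hf hg; rewrite /cinner -cintegralZ //; last exact: cintegrable_mulJ.
by apply: congr1; apply/funext => x; rewrite mulrA.
Qed.

Lemma cinnerC f g : sqint f -> sqint g -> cinner g f = (cinner f g)^*.
Proof.
move=> hf hg; rewrite /cinner -cintegral_conj //; last exact: cintegrable_mulJ.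
by apply: congr1; apply/funext => x; rewrite rmorphM /= conjCK mulrC.
Qed.

Lemma cinnerDr f g g' : sqint f -> sqint g -> sqint g' ->
  cinner f (fun x => g x + g' x) = cinner f g + cinner f g'.
Proof.
move=> hf hg hg'; rewrite cinnerC ?cinnerDl ?rmorphD /= -?cinnerC //.
exact: square_integrableD.
Qed.

Lemma cinnerZr c f g : sqint f -> sqint g ->
  cinner f (fun x => c * g x) = c^* * cinner f g.
Proof.
move=> hf hg; rewrite cinnerC ?cinnerZl ?rmorphM /= -?cinnerC //.
exact: square_integrableZ.
Qed.

Lemma cinner_combl I (r : seq I) (b : I -> R[i]) (F : I -> T -> R[i]) g :
  (forall i, sqint (F i)) -> sqint g ->
  cinner (fun x => \sum_(i <- r) b i * F i x) g = \sum_(i <- r) b i * cinner (F i) g.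
Proof.
move=> hF hg; elim: r => [|i r IH].
  rewrite big_nil /cinner; under eq_fun do rewrite big_nil mul0r.
  by apply: complex_ext; rewrite /= Rintegral_cst // mul0r.
under eq_fun do rewrite big_cons.
rewrite cinnerDl ?cinnerZl ?IH ?big_cons //; first exact: square_integrableZ.
exact: square_integrable_comb.
Qed.

Lemma cinner_combr I (r : seq I) (b : I -> R[i]) (F : I -> T -> R[i]) f :
  (forall i, sqint (F i)) -> sqint f ->
  cinner f (fun x => \sum_(i <- r) b i * F i x) =
  \sum_(i <- r) (b i)^* * cinner f (F i).
Proof.
move=> hF hf; rewrite cinnerC ?cinner_combl ?rmorph_sum //=; last first.
  exact: square_integrable_comb.
by apply: eq_bigr => i _; rewrite rmorphM /= -cinnerC.
Qed.

Lemma integral_sqmod f : sqint f ->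
  (\int[mu]_(x in D) (sqmod (f x))%:E)%E = (complex.Re (cinner f f))%:E.
Proof.
move=> [_ _ fi]; rewrite /= /Rintegral.
have -> : (fun x => (complex.Re (f x * (f x)^*))%:E) = (fun x => (sqmod (f x))%:E).
  by apply/funext => x; rewrite -sqmodE.
by rewrite fineK //; exact: integrable_fin_num.
Qed.

End ComplexInnerProduct.

Section MeanSquareError.
Context d (T : measurableType d) (R : realType)
  (mu : {measure set T -> \bar R}) (D : set T) (mD : measurable D).
Local Notation sqint := (square_integrable mu D).
Local Notation cinner := (cinner mu D).

Lemma cinner_complete_square (Y S : T -> R[i]) (v : R) (beta : R[i]) :
  sqint Y -> sqint S -> cinner Y Y = real_complex R v -> v != 0 ->
  cinner (fun x => beta * Y x - S x) (fun x => beta * Y x - S x) =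
  real_complex R (v * sqmod (beta - cinner S Y / real_complex R v))
  + (cinner S S - cinner S Y * (cinner S Y)^* / real_complex R v).
Proof.
move=> hY hS hYY hv.
have hbY : sqint (fun x => beta * Y x) by exact: square_integrableZ.
have hNS : sqint (fun x => -1 * S x) by exact: square_integrableZ.
have -> : (fun x => beta * Y x - S x) = (fun x => beta * Y x + -1 * S x).
  by apply/funext => x; rewrite mulN1r.
rewrite !(cinnerDl, cinnerDr, cinnerZl, cinnerZr) ?hYY ?(cinnerC mD hS hY) //;
  try exact: square_integrableD.
have hvC : real_complex R v != 0 by rewrite (inj_eq (@complexI _)).
rewrite rmorphM /= sqmodE rmorphB /= fmorph_div /= conj_real_complex ?rmorphN1.
by field.
Qed.

Lemma mse_argmin (Y S : T -> R[i]) : sqint Y -> sqint S -> 0 < cinner Y Y ->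
  forall beta, (forall beta',
    \int[mu]_(x in D) (sqmod (beta * Y x - S x))%:E <=
    \int[mu]_(x in D) (sqmod (beta' * Y x - S x))%:E)%E
  <-> beta = cinner S Y / cinner Y Y.
Proof.
move=> hY hS hYY_gt0 beta.
set v := complex.Re (cinner Y Y).
have hYY : cinner Y Y = real_complex R v by rewrite RRe_real ?gtr0_real.
have v_gt0 : 0 < v by rewrite -ltcR -hYY.
have mse b : (\int[mu]_(x in D) (sqmod (b * Y x - S x))%:E)%E =
    (v * sqmod (b - cinner S Y / cinner Y Y) +
     complex.Re (cinner S S - cinner S Y * (cinner S Y)^* / cinner Y Y))%:E.
  rewrite (integral_sqmod mD); last first.
    by apply: square_integrableB => //; exact: square_integrableZ.
  by rewrite hYY (cinner_complete_square b hY hS hYY (lt0r_neq0 v_gt0)) Re_add.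
split => [|-> beta']; last first.
  by rewrite !mse lee_fin lerD2r subrr sqmod0 mulr0 mulr_ge0 ?sqmod_ge0 ?ltW.
move=> /(_ (cinner S Y / cinner Y Y)); rewrite !mse lee_fin lerD2r subrr sqmod0.
rewrite mulr0 pmulr_rle0 // => hle.
by apply/eqP; rewrite -subr_eq0 -sqmod_eq0 eq_le hle sqmod_ge0.
Qed.

End MeanSquareError.

Section OrthonormalSignals.
Context d (T : measurableType d) (R : realType)
  (mu : {measure set T -> \bar R}) (D : set T) (mD : measurable D).
Local Notation sqint := (square_integrable mu D).
Local Notation cinner := (cinner mu D).
Context (I : finType) (s : I -> T -> R[i]) (N : T -> R[i]) (b : I -> R[i]).
Hypotheses (s_sqint : forall i, sqint (s i)) (N_sqint : sqint N).
Hypothesis s_orthonormal : forall i j, cinner (s i) (s j) = (i == j)%:R.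
Hypothesis N_orthogonal : forall j, cinner N (s j) = 0.

Let signal_sqint : sqint (fun x => \sum_j b j * s j x).
Proof. exact: square_integrable_comb. Qed.

Lemma square_integrable_received : sqint (fun x => \sum_j b j * s j x + N x).
Proof. exact: square_integrableD. Qed.

Lemma cinner_signal_received i :
  cinner (s i) (fun x => \sum_j b j * s j x + N x) = (b i)^*.
Proof.
rewrite (cinnerDr mD) ?(cinner_combr mD) // (cinnerC mD) // N_orthogonal conjC0.
rewrite addr0 (bigD1 i) //= s_orthonormal eqxx mulr1 big1 ?addr0 // => j /negbTE ji.
by rewrite s_orthonormal eq_sym ji mulr0.
Qed.

Lemma cinner_received :
  cinner (fun x => \sum_j b j * s j x + N x) (fun x => \sum_j b j * s j x + N x) =
  \sum_j b j * (b j)^* + cinner N N.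
Proof.
have hY := square_integrable_received.
rewrite [in LHS](cinnerDl mD) ?(cinner_combl mD) //.
under eq_bigr do rewrite cinner_signal_received.
congr (_ + _); rewrite (cinnerDr mD) ?(cinner_combr mD) // big1 ?add0r // => j _.
by rewrite N_orthogonal mulr0.
Qed.

End OrthonormalSignals.

Section HermitianForms.
Variable R : realType.
Local Notation C := R[i].

Lemma ctrE m n (A : 'M[C]_(m, n)) i j : ctr A i j = (A j i)^*.
Proof. by rewrite !mxE. Qed.

Lemma ctr_mul m n p (A : 'M[C]_(m, n)) (B : 'M[C]_(n, p)) :
  ctr (A *m B) = ctr B *m ctr A.
Proof. by rewrite /ctr map_mxM trmx_mul. Qed.

Lemma ctrK m n (A : 'M[C]_(m, n)) : ctr (ctr A) = A.
Proof. by apply/matrixP => i j; rewrite !ctrE conjCK. Qed.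

Lemma col'_ctr m n (j0 : 'I_n) (A : 'M[C]_(n, m)) : col' j0 (ctr A) = ctr (row' j0 A).
Proof. by apply/matrixP => i j; rewrite !mxE. Qed.

Lemma hermitian_entry n (M : 'M[C]_n) i j : ctr M = M -> M i j = (M j i)^*.
Proof. by move=> MH; rewrite -[in LHS]MH ctrE. Qed.

Lemma ctr_mulmx_hermitian n (M : 'M[C]_n) (y : 'cV[C]_n) j :
  ctr M = M -> (ctr y *m M) 0 j = ((M *m y) j 0)^*.
Proof. by move=> MH; rewrite -{1}MH -ctr_mul ctrE. Qed.

Lemma mulmx_split n (i0 : 'I_n.+1) (u : 'rV[C]_n.+1) (y : 'cV[C]_n.+1) :
  (u *m y) 0 0 = u 0 i0 * y i0 0 + (col' i0 u *m row' i0 y) 0 0.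
Proof.
rewrite [LHS]mxE (bigD1_ord i0) //= [in RHS]mxE.
by congr (_ + _); apply: eq_bigr => l _; rewrite !mxE.
Qed.

Lemma invmx_diag n (dd : 'rV[C]_n) : (forall i, dd 0 i != 0) ->
  invmx (diag_mx dd) = diag_mx (\row_i (dd 0 i)^-1).
Proof.
move=> dd_neq0.
have ddV : diag_mx dd *m diag_mx (\row_i (dd 0 i)^-1) = 1%:M.
  by rewrite mulmx_diag; apply/matrixP => i j; rewrite !mxE divff.
have [dd_unit _] := mulmx1_unit ddV.
by rewrite -[RHS](mulKmx dd_unit) ddV mulmx1.
Qed.

Lemma posform_unitmx n (M : 'M[C]_n) :
  (forall y : 'cV[C]_n, y != 0 -> 0 < (ctr y *m M *m y) 0 0) -> M \in unitmx.
Proof.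
move=> M_pos; rewrite -row_free_unit -kermx_eq0.
apply/eqP/row_matrixP => i; rewrite row0.
set z := row i (kermx M); apply/eqP; apply: contraT => z_neq0.
have zM0 : z *m M = 0 by rewrite -row_mul mulmx_ker row0.
have ctrz_neq0 : ctr z != 0.
  by apply: contra z_neq0 => /eqP z0; rewrite -[z]ctrK z0 /ctr map_mx0 trmx0.
by have := M_pos _ ctrz_neq0; rewrite ctrK zM0 mul0mx mxE ltxx.
Qed.

Lemma diag_form n (dg : 'I_n -> R) (y : 'cV[C]_n) :
  (ctr y *m diag_mx (\row_l real_complex R (dg l)) *m y) 0 0 =
  \sum_l real_complex R (dg l * sqmod (y l 0)).
Proof.
rewrite mul_mx_diag !mxE; apply: eq_bigr => l _.
by rewrite !mxE rmorphM /= sqmodE; ring.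
Qed.

Lemma diag_form_ge0 n (dg : 'I_n -> R) (y : 'cV[C]_n) : (forall l, 0 <= dg l) ->
  0 <= (ctr y *m diag_mx (\row_l real_complex R (dg l)) *m y) 0 0.
Proof.
move=> dg_ge0; rewrite diag_form sumr_ge0 // => l _.
by rewrite ler0c mulr_ge0 ?sqmod_ge0.
Qed.

Lemma diag_form_gt0 n (dg : 'I_n -> R) (y : 'cV[C]_n) : (forall l, 0 < dg l) ->
  y != 0 -> 0 < (ctr y *m diag_mx (\row_l real_complex R (dg l)) *m y) 0 0.
Proof.
move=> dg_gt0 y_neq0; have [l yl_neq0] : exists l, y l 0 != 0.
  apply/existsP; apply: contraR y_neq0; rewrite negb_exists => /forallP y0.
  by apply/eqP/matrixP => i j; rewrite (ord1 j) mxE; apply/eqP/negPn/y0.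
rewrite diag_form (bigD1 l) //= ltr_wpDr ?sumr_ge0 // => [j _|].
  by rewrite ler0c mulr_ge0 ?sqmod_ge0 ?ltW.
by rewrite ltcR mulr_gt0 // lt_def sqmod_eq0 yl_neq0 sqmod_ge0.
Qed.

End HermitianForms.

Section DeflatedGram.
Variables (R : realType) (n : nat) (G : 'M[R[i]]_n.+1) (k : 'I_n.+1).
Variable dg : 'I_n -> R.
Hypotheses (G_posdef : posdef G) (dg_gt0 : forall l, 0 < dg l).

Let Dg := diag_mx (\row_l real_complex R (dg l)).
Let Gk := row' k (col' k G).
Let gk := row' k (col k G).
Let E := col' k (1%:M : 'M[R[i]]_n.+1).

Lemma ctr_col'1 : ctr E = row' k 1%:M.
Proof. by apply/matrixP => i j; rewrite !mxE conjC_nat eq_sym. Qed.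

Lemma deflated_system_unitmx : Dg + Gk \in unitmx.
Proof.
apply: posform_unitmx => y y_neq0.
rewrite mulmxDr mulmxDl mxE ltr_pwDl ?diag_form_gt0 //.
have -> : Gk = ctr E *m G *m E.
  by rewrite ctr_col'1 -mulmxA mulmx_colsub mulmx1 -rowsubE.
rewrite -!mulmxA mulmxA -ctr_mul.
have [_ G_pos] := G_posdef; have [->|Ey_neq0] := eqVneq (E *m y) 0.
  by rewrite !mulmx0 mxE.
by rewrite mulmxA; exact/ltW/G_pos.
Qed.

Variable v : 'cV[R[i]]_n.
Hypothesis v_solves : (Dg + Gk) *m v = gk.

(* [weights] is [x] in [w = sum_i x_i h_i]. *)
Let weights := delta_mx k 0 - E *m v.
Let schur := G k k - (ctr gk *m v) 0 0.

Lemma weights_k : weights k 0 = 1.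
Proof.
rewrite !mxE eqxx /= big1 ?subr0 // => l _.
by rewrite !mxE (negbTE (neq_lift k l)) mul0r.
Qed.

Lemma row'_weights : row' k weights = - v.
Proof.
have row'_delta : row' k (delta_mx k 0 : 'cV[R[i]]_n.+1) = 0.
  by apply/matrixP => l j; rewrite !mxE eq_sym (negbTE (neq_lift k l)).
have row'_E : row' k E = 1%:M.
  by apply/matrixP => l m; rewrite !mxE (inj_eq lift_inj).
by rewrite linearB /= row'_delta row'Esub -mul_rowsub_mx -row'Esub row'_E mul1mx sub0r.
Qed.

Let gram_weights : G *m weights = col k G - col' k G *m v.
Proof. by rewrite mulmxBr -colE mulmxA mulmx_colsub mulmx1. Qed.

Lemma gram_weights_k : (G *m weights) k 0 = schur.
Proof.
rewrite gram_weights !mxE; congr (_ - _); rewrite [RHS]mxE; apply: eq_bigr => l _.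
by rewrite !mxE (hermitian_entry _ _ G_posdef.1).
Qed.

Lemma row'_gram_weights : row' k (G *m weights) = Dg *m v.
Proof.
rewrite gram_weights linearB /= row'Esub -mul_rowsub_mx -!row'Esub -/gk -/Gk.
by rewrite -v_solves mulmxDl addrK.
Qed.

Lemma form_weights :
  (ctr weights *m G *m weights) 0 0 = schur - (ctr v *m Dg *m v) 0 0.
Proof.
rewrite -mulmxA (mulmx_split k) col'_ctr ctrE weights_k gram_weights_k.
rewrite row'_weights row'_gram_weights conjC1 mul1r.
by rewrite /ctr map_mxN linearN /= mulNmx mulmxA mxE.
Qed.

Lemma schur_gt0 : 0 < schur.
Proof.
have weights_neq0 : weights != 0.
  apply/eqP => w0; have := weights_k; rewrite w0 mxE => /eqP.
  by rewrite eq_sym oner_eq0.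
have -> : schur = (ctr weights *m G *m weights) 0 0 + (ctr v *m Dg *m v) 0 0.
  by rewrite form_weights subrK.
by rewrite ltr_wpDr ?diag_form_ge0 ?G_posdef.2 // => l; rewrite ltW.
Qed.

Variables (P : 'I_n.+1 -> R) (sigma2 : R).
Hypothesis dgE : forall l, P (lift k l) * dg l = sigma2.

Lemma received_power :
  \sum_j real_complex R (P j) * ((G *m weights) j 0 * ((G *m weights) j 0)^*)
  + real_complex R sigma2 * (ctr weights *m G *m weights) 0 0 =
  schur * (real_complex R (P k) * schur + real_complex R sigma2).
Proof.
have schurJ : schur^* = schur by rewrite conj_Creal // gtr0_real // schur_gt0.
have gram_weights_lift l : (G *m weights) (lift k l) 0 = real_complex R (dg l) * v l 0.
  by have := congr1 (fun M : 'cV_n => M l 0) row'_gram_weights; rewrite mul_diag_mx !mxE.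
rewrite (bigD1_ord k) //= gram_weights_k schurJ form_weights diag_form.
under eq_bigr do rewrite gram_weights_lift rmorphM /= conj_real_complex.
rewrite (eq_bigr (fun l => real_complex R sigma2 * real_complex R (dg l * sqmod (v l 0)))).
  by rewrite -mulr_sumr; ring.
by move=> l _; rewrite -(dgE l) !rmorphM /= sqmodE; ring.
Qed.

End DeflatedGram.

Section GramCombination.
Context d (T : measurableType d) (R : realType)
  (mu : {measure set T -> \bar R}) (D : set T) (mD : measurable D).
Context (K : nat) (h : 'I_K -> T -> R[i]) (G : 'M[R[i]]_K) (x : 'cV[R[i]]_K).
Hypothesis h_sqint : forall j, square_integrable mu D (h j).
Hypothesis G_gram : forall i j, G i j = cintegral mu D (fun r => (h i r)^* * h j r).

Let comb_sqint : square_integrable mu D (fun r => \sum_i x i 0 * h i r).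
Proof. exact: square_integrable_comb. Qed.

Lemma gram_hermitian : ctr G = G.
Proof.
apply/matrixP => i j; rewrite ctrE !G_gram -(cintegral_conj mD); last exact: cintegrable_Jmul.
by apply: congr1; apply/funext => r; rewrite rmorphM /= conjCK mulrC.
Qed.

Lemma cinner_gram_comb j :
  cinner mu D (h j) (fun r => \sum_i x i 0 * h i r) = (ctr x *m G) 0 j.
Proof.
rewrite (cinner_combr mD) // mxE; apply: eq_bigr => i _.
rewrite !mxE G_gram; congr (_ * _); rewrite /cinner; apply: congr1.
by apply/funext => r; rewrite mulrC.
Qed.

Lemma cintegral_gram_form :
  cintegral mu D (fun r => (\sum_i x i 0 * h i r)^* * \sum_i x i 0 * h i r) =
  (ctr x *m G *m x) 0 0.
Proof.
transitivity (cinner mu D (fun r => \sum_i x i 0 * h i r) (fun r => \sum_i x i 0 * h i r)).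
  by apply: congr1; apply/funext => r; rewrite mulrC.
rewrite (cinner_combl mD) // mxE.
by apply: eq_bigr => j _; rewrite cinner_gram_comb mulrC.
Qed.

Lemma cintegral_received (a z : 'I_K -> R[i]) :
  cintegral mu D (fun r => (\sum_i x i 0 * h i r)^* * \sum_j a j * h j r * z j) =
  \sum_j a j * ((G *m x) j 0)^* * z j.
Proof.
transitivity (cinner mu D (fun r => \sum_j (a j * z j) * h j r)
                          (fun r => \sum_i x i 0 * h i r)).
  apply: congr1; apply/funext => r; rewrite mulrC; congr (_ * _).
  by apply: eq_bigr => j _; rewrite mulrAC.
rewrite (cinner_combl mD) //; apply: eq_bigr => j _.
by rewrite cinner_gram_comb (ctr_mulmx_hermitian _ _ gram_hermitian) mulrAC.
Qed.

End GramCombination.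

Section MMSECombiner.
Variables (R : realType) (n : nat) (Rm : 'M[R[i]]_n.+1) (k : 'I_n.+1).
Variables (Pw : 'I_n.+1 -> R) (sigma2 : R).
Hypotheses (Rm_posdef : posdef Rm) (Pw_gt0 : forall j, 0 < Pw j) (sigma2_gt0 : 0 < sigma2).

Let Rk : 'M[R[i]]_(n.+1.-1) := \matrix_(i, j) Rm (skip k i) (skip k j).
Let rkk : 'cV[R[i]]_(n.+1.-1) := \col_i Rm (skip k i) k.
Let Pk : 'M[R[i]]_(n.+1.-1) := diag_mx (\row_i real_complex R (Pw (skip k i) / sigma2)).
Let M := invmx (invmx Pk + Rk).
Let weights := delta_mx k 0 - col' k 1%:M *m (M *m rkk).
Let schur := Rm k k - (ctr rkk *m M *m rkk) 0 0.
Let dg l := sigma2 / Pw (lift k l).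

Let skip_lift l : skip k l = lift k l.
Proof. exact: val_inj. Qed.

Let dg_gt0 l : 0 < dg l.
Proof. by rewrite divr_gt0. Qed.

Let invPk : invmx Pk = diag_mx (\row_l real_complex R (dg l)).
Proof.
rewrite invmx_diag => [|i]; last by rewrite !mxE (inj_eq (@complexI _)) gt_eqF ?divr_gt0.
by apply/matrixP => i j; rewrite !mxE -fmorphV /= invf_div skip_lift.
Qed.

Let rkkE : rkk = row' k (col k Rm).
Proof. by apply/matrixP => i j; rewrite !mxE skip_lift. Qed.

Let v_solves :
  (diag_mx (\row_l real_complex R (dg l)) + row' k (col' k Rm)) *m (M *m rkk) =
  row' k (col k Rm).
Proof.
have RkE : Rk = row' k (col' k Rm) by apply/matrixP => i j; rewrite !mxE !skip_lift.
by rewrite /M invPk RkE rkkE mulKVmx // deflated_system_unitmx.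
Qed.

Let schurE : schur = Rm k k - (ctr (row' k (col k Rm)) *m (M *m rkk)) 0 0.
Proof. by rewrite /schur mulmxA rkkE. Qed.

Lemma mmse_weights (f : 'I_n.+1 -> R[i]) :
  \sum_i weights i 0 * f i = f k - ((\row_i f (skip k i)) *m M *m rkk) 0 0.
Proof.
transitivity ((\row_i f i *m weights) 0 0).
  by rewrite [RHS]mxE; apply: eq_bigr => i _; rewrite [_ 0 i]mxE mulrC.
rewrite (mulmx_split k) weights_k row'_weights mulmxN mulmxA.
have -> : col' k (\row_i f i) = \row_i f (skip k i).
  by apply/matrixP => i j; rewrite !mxE skip_lift.
by rewrite [_ 0 k]mxE mulr1 [X in _ + X]mxE.
Qed.

Let b j := real_complex R (Num.sqrt (Pw j)) * ((Rm *m weights) j 0)^*.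
Let power :=
  \sum_j b j * (b j)^* + real_complex R sigma2 * (ctr weights *m Rm *m weights) 0 0.

Let schur_gt0 : 0 < schur.
Proof. by rewrite schurE (schur_gt0 Rm_posdef dg_gt0 v_solves). Qed.

Let powerE : power = schur * (real_complex R (Pw k) * schur + real_complex R sigma2).
Proof.
rewrite schurE -(received_power Rm_posdef dg_gt0 v_solves) => [|l]; last first.
  by rewrite /dg mulrC divfK // gt_eqF.
congr (_ + _); apply: eq_bigr => j _.
rewrite rmorphM /= conjCK conj_real_complex mulrACA -rmorphM /=.
by rewrite -expr2 sqr_sqrtr ?ltW // [_^* * _]mulrC.
Qed.

Lemma mmse_power_gt0 : 0 < power.
Proof. by rewrite powerE mulr_gt0 // addr_gt0 ?mulr_gt0 // ltcR. Qed.

Lemma mmse_gain : (b k)^* / power =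
  real_complex R (Num.sqrt (Pw k)) / (real_complex R (Pw k) * schur + real_complex R sigma2).
Proof.
have schur_neq0 : schur != 0 by rewrite gt_eqF.
have gram_weights_kE : (Rm *m weights) k 0 = schur by rewrite schurE gram_weights_k.
rewrite powerE rmorphM /= conjCK conj_real_complex gram_weights_kE.
by rewrite invfM mulrA mulfK.
Qed.

End MMSECombiner.

Lemma cexpectE d (T : measurableType d) (R : realType) (P : probability T R)
    (X : T -> R[i]) :
  cexpect P X = cintegral P setT X.
Proof. by rewrite /cexpect /cintegral !unlock. Qed.

Theorem lemma11 (R : realType) (d : measure_display) (T : measurableType d)
  (P : probability T R)
  (A : set (R3 R)) (hA : measurable A)
  (K : nat) (hK : (2 <= K)%N)
  (Pw : 'I_K -> R) (hPw : forall j, 0 < Pw j)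
  (sigma2 : R) (hsigma2 : 0 < sigma2)
  (h : 'I_K -> R3 R -> R[i]) (hL2 : forall j, L2 A (h j))
  (hR : posdef (gram A h))
  (* symbols s_j : zero mean, unit variance, mutually uncorrelated *)
  (s : 'I_K -> T -> R[i])
  (hs_L2 : forall j, cL2 P (s j))
  (hs_mean : forall j, cexpect P (s j) = 0)
  (hs_cov : forall i j,
     cexpect P (fun t => s i t * Num.conj (s j t)) = (i == j)%:R)
  (* noise: N f = int_A f^* n dr, for f in L^2(A) *)
  (N : (R3 R -> R[i]) -> T -> R[i])
  (hN_L2 : forall f, L2 A f -> cL2 P (N f))
  (hN_mean : forall f, L2 A f -> cexpect P (N f) = 0)
  (hN_cov : forall f g, L2 A f -> L2 A g ->
     cexpect P (fun t => N f t * Num.conj (N g t))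
     = real_complex R sigma2 * cint A (fun r => Num.conj (f r) * g r))
  (hN_s : forall f j, L2 A f ->
     cexpect P (fun t => N f t * Num.conj (s j t)) = 0)
  (k : 'I_K) :
  let Rm := gram A h in
  let a := Rm k k in
  let Rk : 'M[R[i]]_(K.-1) := \matrix_(i, j) Rm (skip k i) (skip k j) in
  let rkk : 'cV[R[i]]_(K.-1) := \col_i Rm (skip k i) k in
  let Pk : 'M[R[i]]_(K.-1) :=
    diag_mx (\row_i real_complex R (Pw (skip k i) / sigma2)) in
  let M := invmx (invmx Pk + Rk) in
  let hvec (r : R3 R) : 'rV[R[i]]_(K.-1) := \row_i h (skip k i) r in
  let w (r : R3 R) := h k r - (hvec r *m M *m rkk) 0 0 in
  let yhat (t : T) :=
    cint A (fun r => Num.conj (w r) *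
      (\sum_j real_complex R (Num.sqrt (Pw j)) * h j r * s j t)) + N w t in
  let mse (beta : R[i]) : \bar R :=
    expectation P (fun t => sqmod (beta * yhat t - s k t)) in
  let beta_star := real_complex R (Num.sqrt (Pw k)) /
      (real_complex R (Pw k) * (a - (ctr rkk *m M *m rkk) 0 0)
       + real_complex R sigma2) in
  (forall beta : R[i], (forall beta', (mse beta <= mse beta')%E) <-> beta = beta_star)
  /\ (forall r, beta_star * w r =
       real_complex R (Num.sqrt (Pw k)) * (h k r - (hvec r *m M *m rkk) 0 0) /
       (real_complex R (Pw k) * (a - (ctr rkk *m M *m rkk) 0 0)
        + real_complex R sigma2)).
Proof.
case: K hK Pw hPw h hL2 hR s hs_L2 hs_mean hs_cov N hN_L2 hN_mean hN_cov hN_s k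
  => [//|n] _ Pw hPw h hL2 hR s hs_L2 _ hs_cov N hN_L2 _ hN_cov hN_s k.
move=> Rm a Rk rkk Pk M hvec w yhat mse beta_star.
split=> [beta|r]; last by rewrite /beta_star mulrAC.
have h_sqint j : square_integrable (@leb3 R) A (h j) := hL2 j.
have Rm_gram i j : Rm i j = cintegral (@leb3 R) A (fun r => (h i r)^* * h j r).
  by rewrite mxE.
set x := delta_mx k 0 - col' k 1%:M *m (M *m rkk).
have wE : w = fun r => \sum_i x i 0 * h i r by apply/funext => r; rewrite mmse_weights.
have w_sqint : square_integrable (@leb3 R) A w by rewrite wE; exact: square_integrable_comb.
set Y := fun t => \sum_j real_complex R (Num.sqrt (Pw j)) * ((Rm *m x) j 0)^* * s j t + N w t.
have yhatE : yhat = Y.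
  apply/funext => t; rewrite /yhat /Y {1}wE -[cint A]/(cintegral (@leb3 R) A).
  by rewrite (cintegral_received _ x h_sqint Rm_gram).
have s_orth i j : cinner P setT (s i) (s j) = (i == j)%:R by rewrite /cinner -cexpectE.
have N_orth j : cinner P setT (N w) (s j) = 0 by rewrite /cinner -cexpectE hN_s.
have s_sqint j : square_integrable P setT (s j) := hs_L2 j.
have Nw_sqint : square_integrable P setT (N w) := hN_L2 w w_sqint.
have NN : cinner P setT (N w) (N w) = real_complex R sigma2 * (ctr x *m Rm *m x) 0 0.
  rewrite /cinner -cexpectE hN_cov // wE -[cint A]/(cintegral (@leb3 R) A).
  by rewrite (cintegral_gram_form _ x h_sqint Rm_gram).
have YY := cinner_received measurableT _ s_sqint Nw_sqint s_orth N_orth.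
suff -> : beta_star = cinner P setT (s k) Y / cinner P setT Y Y.
  rewrite /mse unlock yhatE; apply: mse_argmin => //.
    exact: square_integrable_received.
  by rewrite /Y YY NN; exact: mmse_power_gt0.
rewrite /Y YY NN (cinner_signal_received measurableT _ s_sqint Nw_sqint s_orth N_orth).
by rewrite mmse_gain.
Qed.
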